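(* In the setting described in the context, if $\alpha'(0)=0$, then $\gamma$ is a circle centered at the origin.
   Context: Setting: $\mathbb{R}^2$ in polar coordinates $(r,\theta)$ with Riemannian metric $ds^2=dr^2+h(r)^2d\theta^2$ ($h$ smooth, $h>0$ on $(0,\infty)$) and smooth positive radial density $f(r)=e^{\psi(r)}$; area and length are weighted by $f$. Let $A$ be an isoperimetric region (it minimizes weighted length of boundary among regions of the same weighted area) which is spherically symmetrized: for each $r>0$, $A\cap\{|x|=r\}$ is empty, the whole circle, or a closed arc of that circle symmetric about the ray $\theta=0$. Let $\gamma:[-\beta,\beta]\to\mathbb{R}^2$ be a smooth, counterclockwise, arclength (with respect to $ds$) parametrization of the component of $\partial A$ farthest from the origin, such that $\gamma(0)$ and $\gamma(\beta)=\gamma(-\beta)$ lie on the $x$-axis, $\gamma$ is symmetric about the $x$-axis, lies above the $x$-axis on $(0,\beta)$ and below it on $(-\beta,0)$, and $\gamma(0)$ is a point of $\gamma$ farthest from the origin. Write $\gamma(t)=(r(t),\theta(t))$. Let $\alpha(t)$ be the counterclockwise angle, measured in $ds$, from the unit radial vector $\hat r(t)$ at $\gamma(t)$ to $\gamma'(t)$, chosen continuously in $t$ with $\alpha(0)\in[0,2\pi)$. The generalized curvature $\kappa_f=\kappa+\partial\psi/\partial\nu$ ($\kappa$ the inward geodesic curvature, $\nu$ the outward unit normal) is constant along $\gamma$ since $A$ is isoperimetric, and equals $(\log fh)'(r(t))\sin\alpha(t)+\alpha'(t)$. *)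

From Stdlib Require Import Reals.
From Coquelicot Require Import Coquelicot.
Open Scope R_scope.

Definition smooth_on (D : R -> Prop) (f : R -> R) : Prop :=
  forall (n : nat) (x : R), D x -> ex_derive_n f n x.

Definition density (psi : R -> R) : R -> R := fun s => exp (psi s).

Definition dlog_fh (psi h : R -> R) (s : R) : R :=
  Derive (fun u => ln (density psi u * h u)) s.

(** Since r(0) is maximal, r'(0) = cos α(0) = 0, and with α'(0) = 0 the
    constancy of κ_f gives κ_f = (log fh)'(r(0)) sin α(0).  Hence the constant
    pair (r(0), α(0)) solves the system r' = cos α, α' = κ_f - (log fh)'(r) sin α
    with the same initial data as (r, α).  The right-hand side is Lipschitz, so
    E = (r - r(0))^2 + (α - α(0))^2 satisfies E' <= C E and E(0) = 0, whence
    E = 0 on [0, β] by Grönwall; the symmetry r(-t) = r(t) covers [-β, 0]. *)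

From Stdlib Require Import Reals Lra.
From Coquelicot Require Import Coquelicot.
Open Scope R_scope.

Lemma lipschitz_of_derive_bound (f df : R -> R) (a b L : R) :
  (forall x, Rmin a b <= x <= Rmax a b -> is_derive f x (df x)) ->
  (forall x, Rmin a b <= x <= Rmax a b -> Rabs (df x) <= L) ->
  Rabs (f b - f a) <= L * Rabs (b - a).
Proof.
  intros Hf Hdf.
  destruct (MVT_abs f df a b) as [c [Hc Hcab]].
  { intros c Hc. apply is_derive_Reals, Hf, Hc. }
  rewrite Hc. apply Rmult_le_compat_r; [apply Rabs_pos | apply Hdf, Hcab].
Qed.

Lemma sin_lipschitz (a b : R) : Rabs (sin b - sin a) <= Rabs (b - a).
Proof.
  rewrite <- (Rmult_1_l (Rabs (b - a))).
  apply (lipschitz_of_derive_bound sin cos).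
  - intros x _. apply is_derive_Reals, derivable_pt_lim_sin.
  - intros x _. apply Rabs_le, COS_bound.
Qed.

Lemma cos_lipschitz (a b : R) : Rabs (cos b - cos a) <= Rabs (b - a).
Proof.
  rewrite <- (Rmult_1_l (Rabs (b - a))).
  apply (lipschitz_of_derive_bound cos (fun x => - sin x)).
  - intros x _. apply is_derive_Reals, derivable_pt_lim_cos.
  - intros x _. rewrite Rabs_Ropp. apply Rabs_le, SIN_bound.
Qed.

Lemma lipschitz_on_of_continuous_derive (f df : R -> R) (m M : R) :
  m <= M ->
  (forall x, m <= x <= M -> is_derive f x (df x)) ->
  (forall x, m <= x <= M -> continuity_pt df x) ->
  exists K, 0 <= K /\ forall x y, m <= x <= M -> m <= y <= M ->
    Rabs (f y - f x) <= K * Rabs (y - x).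
Proof.
  intros HmM Hf Hdf.
  destruct (continuity_ab_maj (fun x => Rabs (df x)) m M HmM) as [c [Hc _]].
  { intros x Hx. apply (continuity_pt_comp df Rabs); [apply Hdf, Hx | apply Rcontinuity_abs]. }
  exists (Rabs (df c)). split; [apply Rabs_pos |].
  intros x y Hx Hy.
  assert (Hxy : forall z, Rmin x y <= z <= Rmax x y -> m <= z <= M)
    by (intros z; unfold Rmin, Rmax; destruct (Rle_dec x y); lra).
  apply (lipschitz_of_derive_bound f df); intros z Hz; [apply Hf | apply Hc]; apply Hxy, Hz.
Qed.

Lemma continuity_pt_of_ex_derive (f : R -> R) (x : R) :
  ex_derive f x -> continuity_pt f x.
Proof. intros Hf. apply continuity_pt_filterlim. exact (ex_derive_continuous f x Hf). Qed.

Lemma Derive_zero_at_interior_max (f : R -> R) (a b c : R) :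
  a < c < b -> ex_derive f c -> (forall x, a < x < b -> f x <= f c) ->
  Derive f c = 0.
Proof.
  intros Hc Hf Hmax.
  pose (pr := exist (fun l => derivable_pt_lim f c l) (Derive f c)
                (proj1 (is_derive_Reals _ _ _) (Derive_correct _ _ Hf))).
  change (Derive f c) with (derive_pt f c pr).
  apply (deriv_maximum f a b c pr); try lra.
  intros x Hax Hxb. apply Hmax. lra.
Qed.

Lemma dlog_fh_expand (psi h : R -> R) (s : R) :
  ex_derive psi s -> ex_derive h s -> 0 < h s ->
  dlog_fh psi h s = Derive psi s + Derive h s / h s.
Proof.
  intros Hpsi Hh Hpos. unfold dlog_fh, density. apply is_derive_unique.
  auto_derive.
  - repeat split; auto. apply Rmult_lt_0_compat; [apply exp_pos | exact Hpos].
  - change (fun x => psi x) with psi. change (fun x => h x) with h.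
    field. split; [lra | apply Rgt_not_eq, exp_pos].
Qed.

Lemma dlog_fh_lipschitz_on (psi h : R -> R) (m M : R) :
  smooth_on (fun s => 0 < s) h -> (forall s, 0 < s -> 0 < h s) ->
  smooth_on (fun s => 0 < s) psi -> 0 < m <= M ->
  exists K, 0 <= K /\ forall x y, m <= x <= M -> m <= y <= M ->
    Rabs (dlog_fh psi h y - dlog_fh psi h x) <= K * Rabs (y - x).
Proof.
  intros Hh Hhpos Hpsi HmM.
  destruct (lipschitz_on_of_continuous_derive
              (fun s => Derive psi s + Derive h s / h s)
              (fun s => Derive_n psi 2 s
                        + (Derive_n h 2 s * h s - Derive h s ^ 2) / h s ^ 2) m M)
    as [K [HK HL]]; [lra | | |].
  - intros x Hx. assert (Hhx : 0 < h x) by (apply Hhpos; lra).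
    auto_derive.
    + repeat split; try lra; [apply (Hpsi 2%nat) | apply (Hh 2%nat) | apply (Hh 1%nat)]; lra.
    + change (Derive_n psi 2 x) with (Derive (fun y => Derive psi y) x).
      change (Derive_n h 2 x) with (Derive (fun y => Derive h y) x).
      change (fun y => h y) with h. field. lra.
  - intros x Hx. assert (Hhx : 0 < h x) by (apply Hhpos; lra).
    apply continuity_pt_of_ex_derive.
    auto_derive. repeat split; try (apply Rgt_not_eq; nra);
      first [ exact (Hpsi 3%nat x ltac:(lra)) | exact (Hh 3%nat x ltac:(lra))
            | exact (Hh 2%nat x ltac:(lra)) | exact (Hh 1%nat x ltac:(lra)) ].
  - exists K. split; [exact HK |].
    intros x y Hx Hy.
    rewrite !dlog_fh_expand; try (apply Hhpos; lra);
      try (apply (Hpsi 1%nat); lra); try (apply (Hh 1%nat); lra).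
    apply HL; assumption.
Qed.

Lemma energy_growth_bound (u v du dv K M : R) :
  0 <= K -> 0 <= M -> Rabs du <= Rabs v -> Rabs dv <= K * Rabs u + M * Rabs v ->
  2 * (u * du + v * dv) <= (1 + K + 2 * M) * (u ^ 2 + v ^ 2).
Proof.
  intros HK HM Hdu Hdv.
  assert (Hu : u * du <= Rabs u * Rabs v).
  { apply Rle_trans with (Rabs u * Rabs du); [rewrite <- Rabs_mult; apply Rle_abs |].
    apply Rmult_le_compat_l; [apply Rabs_pos | exact Hdu]. }
  assert (Hv : v * dv <= Rabs v * (K * Rabs u + M * Rabs v)).
  { apply Rle_trans with (Rabs v * Rabs dv); [rewrite <- Rabs_mult; apply Rle_abs |].
    apply Rmult_le_compat_l; [apply Rabs_pos | exact Hdv]. }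
  assert (Hamgm : 2 * (Rabs u * Rabs v) <= u ^ 2 + v ^ 2).
  { rewrite <- (pow2_abs u), <- (pow2_abs v). pose proof (pow2_ge_0 (Rabs u - Rabs v)). nra. }
  assert (Hvv : Rabs v * Rabs v = v ^ 2) by (rewrite <- pow2_abs; ring).
  pose proof (Rmult_le_pos _ _ HM (pow2_ge_0 u)).
  pose proof (Rmult_le_compat_l K _ _ HK Hamgm).
  nra.
Qed.

Lemma gronwall_vanish (E dE : R -> R) (b C : R) :
  (forall t, 0 <= t <= b -> is_derive E t (dE t)) ->
  (forall t, 0 <= t <= b -> dE t <= C * E t) ->
  E 0 = 0 ->
  forall t, 0 <= t <= b -> E t <= 0.
Proof.
  intros HE HdE HE0 t Ht.
  destruct (Req_dec t 0) as [-> | Ht0]; [lra |].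
  (* E(s) e^{-Cs} is nonincreasing and vanishes at 0. *)
  destruct (MVT_cor2 (fun s => E s * exp (- (C * s)))
              (fun s => (dE s - C * E s) * exp (- (C * s))) 0 t) as [c [Hc Hct]];
    [lra | |].
  - intros s Hs. apply is_derive_Reals.
    assert (HEs := HE s ltac:(lra)).
    auto_derive; [exists (dE s); exact HEs |].
    change (fun x => E x) with E. rewrite (is_derive_unique _ _ _ HEs). ring.
  - assert (Hdec : (dE c - C * E c) * exp (- (C * c)) <= 0).
    { apply Rmult_le_0_r; [pose proof (HdE c ltac:(lra)); lra | left; apply exp_pos]. }
    rewrite HE0, Rmult_0_l, Rminus_0_r in Hc.
    pose proof (exp_pos (- (C * t))). nra.
Qed.

Lemma curvature_system_stationary (G : R -> R) (b K : R) (r alpha : R -> R) :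
  0 <= K ->
  (forall t, 0 <= t <= b -> ex_derive r t /\ ex_derive alpha t) ->
  (forall t, 0 <= t <= b -> Derive r t = cos (alpha t)) ->
  (forall t, 0 <= t <= b ->
     Derive alpha t = G (r 0) * sin (alpha 0) - G (r t) * sin (alpha t)) ->
  cos (alpha 0) = 0 ->
  (forall t, 0 <= t <= b -> Rabs (G (r t) - G (r 0)) <= K * Rabs (r t - r 0)) ->
  forall t, 0 <= t <= b -> r t = r 0.
Proof.
  intros HK Hex Hdr Hda Hc0 HG.
  assert (Henergy : forall t, 0 <= t <= b ->
            (r t - r 0) ^ 2 + (alpha t - alpha 0) ^ 2 <= 0).
  { apply (gronwall_vanish (fun t => (r t - r 0) ^ 2 + (alpha t - alpha 0) ^ 2)
             (fun t => 2 * ((r t - r 0) * Derive r t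
                            + (alpha t - alpha 0) * Derive alpha t))
             b (1 + K + 2 * Rabs (G (r 0)))); [| | ring].
    - intros t Ht. destruct (Hex t Ht) as [Hr Ha].
      auto_derive; [tauto |].
      change (fun x => r x) with r. change (fun x => alpha x) with alpha. ring.
    - intros t Ht. apply energy_growth_bound; [exact HK | apply Rabs_pos | |].
      + rewrite Hdr by exact Ht.
        replace (cos (alpha t)) with (cos (alpha t) - cos (alpha 0)) by (rewrite Hc0; ring).
        apply cos_lipschitz.
      + rewrite Hda by exact Ht.
        replace (G (r 0) * sin (alpha 0) - G (r t) * sin (alpha t))
          with ((G (r 0) - G (r t)) * sin (alpha t)
                + - (G (r 0) * (sin (alpha t) - sin (alpha 0)))) by ring.
        eapply Rle_trans; [apply Rabs_triang |].
        rewrite Rabs_Ropp, !Rabs_mult.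
        apply Rplus_le_compat.
        * apply Rle_trans with (Rabs (G (r 0) - G (r t)) * 1).
          -- apply Rmult_le_compat_l; [apply Rabs_pos | apply Rabs_le, SIN_bound].
          -- rewrite Rmult_1_r, Rabs_minus_sym. apply HG, Ht.
        * apply Rmult_le_compat_l; [apply Rabs_pos | apply sin_lipschitz]. }
  intros t Ht. specialize (Henergy t Ht).
  pose proof (pow2_ge_0 (r t - r 0)). pose proof (pow2_ge_0 (alpha t - alpha 0)).
  nra.
Qed.

Theorem lemma5p1
  (h psi : R -> R) (beta : R) (r theta alpha : R -> R) :
  (* metric and density *)
  smooth_on (fun s => 0 < s) h ->
  (forall s, 0 < s -> 0 < h s) ->
  smooth_on (fun s => 0 < s) psi ->
  (* gamma : [-beta, beta] -> R^2, smooth, in polar coordinates away from 0 *)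
  0 < beta ->
  smooth_on (fun t => -beta <= t <= beta) r ->
  smooth_on (fun t => -beta <= t <= beta) theta ->
  (forall t, -beta <= t <= beta -> 0 < r t) ->
  (* arclength parametrization with respect to ds *)
  (forall t, -beta <= t <= beta ->
     (Derive r t) ^ 2 + (h (r t)) ^ 2 * (Derive theta t) ^ 2 = 1) ->
  (* gamma(0) and gamma(beta) = gamma(-beta) on the x-axis; symmetry about the
     x-axis; above the axis on (0,beta), below on (-beta,0) *)
  sin (theta 0) = 0 ->
  sin (theta beta) = 0 ->
  (forall t, -beta <= t <= beta ->
     r (- t) = r t /\ cos (theta (- t)) = cos (theta t)
     /\ sin (theta (- t)) = - sin (theta t)) ->
  (forall t, 0 < t < beta -> 0 < r t * sin (theta t)) ->
  (forall t, - beta < t < 0 -> r t * sin (theta t) < 0) ->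
  (* gamma(0) is a point of gamma farthest from the origin *)
  (forall t, -beta <= t <= beta -> r t <= r 0) ->
  (* alpha: continuous (indeed smooth) choice of the angle from r-hat to gamma',
     with alpha(0) in [0, 2 pi) *)
  smooth_on (fun t => -beta <= t <= beta) alpha ->
  (forall t, -beta <= t <= beta ->
     Derive r t = cos (alpha t) /\ h (r t) * Derive theta t = sin (alpha t)) ->
  0 <= alpha 0 < 2 * PI ->
  (* the generalized curvature kf = (log f h)'(r) sin alpha + alpha' is constant *)
  (exists kf : R, forall t, -beta <= t <= beta ->
     dlog_fh psi h (r t) * sin (alpha t) + Derive alpha t = kf) ->
  (* hypothesis alpha'(0) = 0 *)
  Derive alpha 0 = 0 ->
  (* conclusion: gamma is a circle centered at the origin *)
  exists R0 : R, 0 < R0 /\ forall t, -beta <= t <= beta -> r t = R0.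
Proof.
  intros Hh Hhpos Hpsi Hb Hr _ Hrpos _ _ _ Hsym _ _ Hmax Hal Hdir _ [kf Hkf] Hda0.
  assert (I0 : -beta <= 0 <= beta) by lra.
  assert (Hc0 : cos (alpha 0) = 0).
  { rewrite <- (proj1 (Hdir 0 I0)).
    apply (Derive_zero_at_interior_max r (-beta) beta); [lra | exact (Hr 1%nat 0 I0) |].
    intros x Hx. apply Hmax. lra. }
  destruct (continuity_ab_min r 0 beta) as [tm [Htm Htmb]]; [lra | |].
  { intros t Ht. apply continuity_pt_of_ex_derive, (Hr 1%nat). lra. }
  destruct (dlog_fh_lipschitz_on psi h (r tm) (r 0)) as [K [HK HL]]; auto.
  { split; [apply Hrpos | apply Htm]; lra. }
  assert (Hconst : forall t, 0 <= t <= beta -> r t = r 0).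
  { apply (curvature_system_stationary (dlog_fh psi h) beta K r alpha HK); [| | | exact Hc0 |];
      intros t Ht; assert (Itb : -beta <= t <= beta) by lra.
    - split; [exact (Hr 1%nat t Itb) | exact (Hal 1%nat t Itb)].
    - apply Hdir, Itb.
    - pose proof (Hkf t Itb). pose proof (Hkf 0 I0). rewrite Hda0 in *. lra.
    - apply HL; split; try (apply Htm; lra); try (apply Hmax; lra); lra. }
  exists (r 0). split; [apply Hrpos, I0 |].
  intros t Ht. destruct (Rle_or_lt 0 t) as [Ht0 | Ht0]; [apply Hconst; lra |].
  rewrite <- (proj1 (Hsym t Ht)). apply Hconst. lra.
Qed.
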